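(* For every $x'\in\mathbb R^d$, $$\hat w^\top x'-\gamma(x')\;\le\; w^{*\top}_{\tilde C}x'\;\le\;\hat w^\top x'+\delta(x').$$
   Context: Let $\{(x_i,y_i)\}_{i=1}^n\subset\mathbb R^d\times\{-1,1\}$ be a training set. Let $\ell:\{-1,1\}\times\mathbb R\to\mathbb R$ be convex in its second argument, and set $\ell_i(w):=\ell(y_i,w^\top x_i)$ for $w\in\mathbb R^d$. For $C>0$ let $w^*_C$ be the (unique) minimizer over $w\in\mathbb R^d$ of $P_C(w)=\frac12\|w\|^2+C\sum_{i=1}^n\ell_i(w)$, where $\|\cdot\|$ is the Euclidean norm. Fix $\tilde C>0$ and an arbitrary vector $\hat w\in\mathbb R^d$; for each $i$ let $\xi_i\in\partial\ell_i(\hat w)$ be any subgradient of $\ell_i$ at $\hat w$, and set $g:=\hat w+\tilde C\sum_{i=1}^n\xi_i$. For $x\in\mathbb R^d$ define $\gamma(x):=\frac12(\|g\|\|x\|+g^\top x)$ and $\delta(x):=\frac12(\|g\|\|x\|-g^\top x)$. *)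

From HB Require Import structures.
From mathcomp Require Import all_boot all_order all_algebra.
Set Implicit Arguments. Unset Strict Implicit. Unset Printing Implicit Defensive.
Import Order.TTheory GRing.Theory Num.Theory.
Local Open Scope ring_scope.

Definition dotv (R : numDomainType) (d : nat) (u v : 'rV[R]_d) : R :=
  \sum_(i < d) u 0 i * v 0 i.

Definition normv (R : rcfType) (d : nat) (u : 'rV[R]_d) : R :=
  Num.sqrt (dotv u u).

Definition convex_fun (R : realFieldType) (f : R -> R) : Prop :=
  forall a b t : R, 0 <= t -> t <= 1 ->
    f (t * a + (1 - t) * b) <= t * f a + (1 - t) * f b.

Definition is_subgradient (R : rcfType) (d : nat) (f : 'rV[R]_d -> R)
    (w0 xi : 'rV[R]_d) : Prop :=
  forall w, f w0 + dotv xi (w - w0) <= f w.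

Definition loss_i (R : rcfType) (d : nat) (ell : R -> R -> R)
    (x : 'rV[R]_d) (y : R) (w : 'rV[R]_d) : R :=
  ell y (dotv w x).

Definition primal (R : rcfType) (d n : nat) (C : R) (ell : R -> R -> R)
    (X : 'I_n -> 'rV[R]_d) (Y : 'I_n -> R) (w : 'rV[R]_d) : R :=
  (normv w) ^+ 2 / 2 + C * \sum_(i < n) loss_i ell (X i) (Y i) w.

Definition gammav (R : rcfType) (d : nat) (g x : 'rV[R]_d) : R :=
  (normv g * normv x + dotv g x) / 2.

Definition deltav (R : rcfType) (d : nat) (g x : 'rV[R]_d) : R :=
  (normv g * normv x - dotv g x) / 2.

(* Minimality of w* along the segment towards w^ gives the variational inequality
   <w*, w^ - w*> + C L w^ - C L w* >= 0, and the subgradient inequality at w^ bounds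
   L w^ - L w* by <sum xi, w^ - w*>.  With v := w^ - w* and g = w^ + C sum xi these combine
   to ||v||^2 <= <g, v>, i.e. v lies in the ball of centre g/2 and radius ||g||/2, and
   Cauchy-Schwarz bounds <v, x'> by <g, x'>/2 -/+ ||g|| ||x'||/2. *)
From HB Require Import structures.
From mathcomp Require Import all_boot all_order all_algebra.
From mathcomp Require Import ring lra.
Import Order.TTheory GRing.Theory Num.Theory.
Set Implicit Arguments. Unset Strict Implicit. Unset Printing Implicit Defensive.
Local Open Scope ring_scope.

Section InnerProduct.
Variables (R : rcfType) (d : nat).
Implicit Types (u v w : 'rV[R]_d).

Lemma dotvC u v : dotv u v = dotv v u.
Proof. by rewrite /dotv; apply: eq_bigr => i _; rewrite mulrC. Qed.

Lemma dotvDl u w v : dotv (u + w) v = dotv u v + dotv w v.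
Proof. by rewrite /dotv -big_split; apply: eq_bigr => i _; rewrite mxE mulrDl. Qed.

Lemma dotvZl (a : R) u v : dotv (a *: u) v = a * dotv u v.
Proof. by rewrite /dotv mulr_sumr; apply: eq_bigr => i _; rewrite mxE mulrA. Qed.

Lemma dotvNl u v : dotv (- u) v = - dotv u v.
Proof. by rewrite -scaleN1r dotvZl mulN1r. Qed.

Lemma dotvBl u w v : dotv (u - w) v = dotv u v - dotv w v.
Proof. by rewrite dotvDl dotvNl. Qed.

Lemma dotvDr u w v : dotv v (u + w) = dotv v u + dotv v w.
Proof. by rewrite !(dotvC v) dotvDl. Qed.

Lemma dotvZr (a : R) u v : dotv v (a *: u) = a * dotv v u.
Proof. by rewrite !(dotvC v) dotvZl. Qed.

Lemma dotvBr u w v : dotv v (u - w) = dotv v u - dotv v w.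
Proof. by rewrite !(dotvC v) dotvBl. Qed.

Lemma dotv_suml n (f : 'I_n -> 'rV[R]_d) v :
  dotv (\sum_(i < n) f i) v = \sum_(i < n) dotv (f i) v.
Proof.
rewrite /dotv; under eq_bigr do rewrite summxE mulr_suml.
by rewrite exchange_big.
Qed.

Lemma dotvv_ge0 u : 0 <= dotv u u.
Proof. by apply: sumr_ge0 => i _; rewrite -expr2 sqr_ge0. Qed.

Lemma normv_ge0 u : 0 <= normv u.
Proof. exact: sqrtr_ge0. Qed.

Lemma normv_sqr u : normv u ^+ 2 = dotv u u.
Proof. by rewrite sqr_sqrtr // dotvv_ge0. Qed.

Lemma dotv_sqr_le u v : dotv u v ^+ 2 <= dotv u u * dotv v v.
Proof.
set a := dotv u u; set b := dotv u v; set c := dotv v v.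
have quad_ge0 t : 0 <= t ^+ 2 * a - 2 * t * b + c.
  have := dotvv_ge0 (t *: u - v).
  by rewrite !dotvBl !dotvBr !dotvZl !dotvZr (dotvC v u) -/a -/b -/c; lra.
have [a_gt0|a_le0] := ltP 0 a; last first.
  (* a = 0: the quadratic is affine in t, so it can only stay nonnegative if b = 0 *)
  have a0 : a = 0 by apply/eqP; rewrite eq_le a_le0 dotvv_ge0.
  have [->|b_neq0] := eqVneq b 0; first by rewrite a0 expr0n mul0r.
  have := quad_ge0 ((c + 1) / (2 * b)).
  have -> : 2 * ((c + 1) / (2 * b)) * b = c + 1 by field; rewrite b_neq0.
  by rewrite a0; lra.
have := quad_ge0 (b / a).
have -> : (b / a) ^+ 2 * a - 2 * (b / a) * b + c = (a * c - b ^+ 2) / a.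
  by field; rewrite gt_eqF.
by rewrite pmulr_lge0 ?invr_gt0 //; lra.
Qed.

Lemma dotv_norm_le u v : `|dotv u v| <= normv u * normv v.
Proof.
rewrite -(ler_pXn2r (_ : 0 < 2)%N) ?nnegrE ?mulr_ge0 ?normv_ge0 //.
by rewrite real_normK ?num_real // exprMn !normv_sqr dotv_sqr_le.
Qed.

Lemma dotv_ball_bounds u c x (r : R) :
  dotv (u - c) (u - c) <= r ^+ 2 -> 0 <= r ->
  dotv c x - r * normv x <= dotv u x <= dotv c x + r * normv x.
Proof.
move=> ucr r_ge0.
have nuc : normv (u - c) <= r by rewrite -(ler_pXn2r (_ : 0 < 2)%N) ?nnegrE ?normv_ge0 ?normv_sqr.
have := dotv_norm_le (u - c) x; rewrite dotvBl ler_norml => /andP[lo hi].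
have := ler_wpM2r (normv_ge0 x) nuc.
by move=> nucx; apply/andP; split; lra.
Qed.

Lemma dotv_diameter_ball_bounds v g x :
  dotv v v <= dotv g v ->
  dotv g x / 2 - normv g * normv x / 2 <= dotv v x <= dotv g x / 2 + normv g * normv x / 2.
Proof.
move=> vg.
have ball : dotv (v - 2^-1 *: g) (v - 2^-1 *: g) <= (normv g / 2) ^+ 2.
  rewrite expr_div_n normv_sqr !dotvBl !dotvBr !dotvZl !dotvZr (dotvC v g).
  by lra.
have := dotv_ball_bounds x ball (divr_ge0 (normv_ge0 g) (ler0n _ 2)).
by rewrite dotvZl mulrAC -mulrA mulrC.
Qed.

End InnerProduct.

Definition convexv (R : realFieldType) (d : nat) (L : 'rV[R]_d -> R) : Prop :=
  forall a b (t : R), 0 <= t -> t <= 1 ->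
    L (t *: a + (1 - t) *: b) <= t * L a + (1 - t) * L b.

Lemma convexv_loss_i (R : rcfType) (d : nat) (ell : R -> R -> R) x (y : R) :
  convex_fun (ell y) -> @convexv R d (loss_i ell x y).
Proof. by move=> cvx a b t t0 t1; rewrite /loss_i dotvDl !dotvZl; apply: cvx. Qed.

Lemma convexv_sum (R : realFieldType) (d n : nat) (L : 'I_n -> 'rV[R]_d -> R) :
  (forall i, convexv (L i)) -> convexv (fun w => \sum_(i < n) L i w).
Proof.
move=> cvx a b t t0 t1; rewrite !mulr_sumr -big_split /=.
by apply: ler_sum => i _; apply: cvx.
Qed.

Lemma is_subgradient_sum (R : rcfType) (d n : nat) (f : 'I_n -> 'rV[R]_d -> R) w0 xi :
  (forall i, is_subgradient (f i) w0 (xi i)) ->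
  is_subgradient (fun w => \sum_(i < n) f i w) w0 (\sum_(i < n) xi i).
Proof.
move=> sub w; rewrite dotv_suml -big_split /=.
by apply: ler_sum => i _; apply: sub.
Qed.

Lemma ge0_of_forall_small (R : realFieldType) (K q : R) :
  (forall t, 0 < t -> t <= 1 -> 0 <= K + t * q) -> 0 <= K.
Proof.
move=> small; rewrite leNgt; apply/negP => K_lt0.
have den_gt0 : 0 < `|q| - K by have := normr_ge0 q; lra.
set t := - K / (`|q| - K).
have t_gt0 : 0 < t by rewrite divr_gt0 // oppr_gt0.
have t_le1 : t <= 1 by rewrite ler_pdivrMr // mul1r; have := normr_ge0 q; lra.
have tq : t * q <= t * `|q| := ler_wpM2l (ltW t_gt0) (ler_norm q).
have : K + t * `|q| = - K ^+ 2 / (`|q| - K) by rewrite /t; field; rewrite gt_eqF.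
have : 0 < K ^+ 2 / (`|q| - K) by rewrite divr_gt0 //; nra.
by have := small t t_gt0 t_le1; lra.
Qed.

Section RegularizedMinimizer.
Variables (R : rcfType) (d : nat) (C : R) (L : 'rV[R]_d -> R).
Hypotheses (C_ge0 : 0 <= C) (L_convex : convexv L).
Variable wstar : 'rV[R]_d.
Hypothesis wstar_min :
  forall w, normv wstar ^+ 2 / 2 + C * L wstar <= normv w ^+ 2 / 2 + C * L w.

Lemma regularized_min_variational w :
  0 <= dotv wstar (w - wstar) + C * (L w - L wstar).
Proof.
apply: ge0_of_forall_small (dotv (w - wstar) (w - wstar) / 2) _ => t t_gt0 t_le1.
set v := w - wstar.
have := L_convex w wstar (ltW t_gt0) t_le1.
have -> : t *: w + (1 - t) *: wstar = wstar + t *: v.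
  by rewrite /v scalerBl scale1r scalerBr addrCA.
move=> /(ler_wpM2l C_ge0) cvx.
have opt := wstar_min (wstar + t *: v).
rewrite !normv_sqr dotvDl !dotvDr !dotvZl !dotvZr (dotvC v wstar) in opt.
suff : 0 <= t * (dotv wstar v + C * (L w - L wstar) + t * (dotv v v / 2)).
  by rewrite pmulr_rge0.
by nra.
Qed.

End RegularizedMinimizer.

Theorem corollary1 (R : rcfType) (d n : nat)
    (X : 'I_n -> 'rV[R]_d) (Y : 'I_n -> R)
    (hY : forall i, Y i = 1 \/ Y i = -1)
    (ell : R -> R -> R)
    (hconv : forall y : R, (y = 1 \/ y = -1) -> convex_fun (ell y))
    (Ct : R) (hCt : 0 < Ct)
    (wstar : 'rV[R]_d)
    (hmin : forall w : 'rV[R]_d, primal Ct ell X Y wstar <= primal Ct ell X Y w)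
    (what : 'rV[R]_d) (xi : 'I_n -> 'rV[R]_d)
    (hxi : forall i, is_subgradient (loss_i ell (X i) (Y i)) what (xi i))
    (x' : 'rV[R]_d) :
  let g := what + Ct *: \sum_(i < n) xi i in
  dotv what x' - gammav g x' <= dotv wstar x' /\
  dotv wstar x' <= dotv what x' + deltav g x'.
Proof.
move=> g; set S := \sum_(i < n) xi i; set v := what - wstar.
set L := fun w => \sum_(i < n) loss_i ell (X i) (Y i) w.
have L_convex : convexv L by apply: convexv_sum => i; apply/convexv_loss_i/hconv.
have variational := regularized_min_variational (ltW hCt) L_convex hmin what.
have subgrad := is_subgradient_sum hxi wstar; rewrite -/S -/(L _) -/(L _) in subgrad.
have subgrad_v : L what - L wstar <= dotv S v.
  by move: subgrad; rewrite /v !dotvBr; lra.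
have v_in_ball : dotv v v <= dotv g v.
  have := ler_wpM2l (ltW hCt) subgrad_v.
  have -> : dotv g v = dotv what v + Ct * dotv S v by rewrite /g dotvDl dotvZl.
  have -> : dotv v v = dotv what v - dotv wstar v by rewrite {1}/v dotvBl.
  by move: variational; lra.
have := dotv_diameter_ball_bounds x' v_in_ball.
rewrite /gammav /deltav /v dotvBl => /andP[lo hi].
by split; lra.
Qed.
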